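(* Let $\mathcal{S}$ be a countably intersected family of subsets of a set $\Gamma$. Every norm-bounded sequence $(\phi_n)_{n\in\mathbb{N}}$ in $J\mathcal{S}$ consisting of finitely supported functions has a subsequence $(\phi_n)_{n\in B}$ such that for every $s\in\mathcal{S}$ the sequence $(s^*(\phi_n))_{n\in B}$ is Cauchy, where $s^*(\phi)=\sum_{a\in s}\phi(a)$.
   Context: A family $\mathcal{S}$ of subsets of $\Gamma$ is countably intersected (C.I.) if: (a) $\mathcal{S}$ consists of countable subsets of $\Gamma$, contains all singletons, and is pointwise closed, i.e. $\{\chi_s : s\in\mathcal{S}\}$ is closed in $\{0,1\}^{\Gamma}$; (b) for all $s,t\in\mathcal{S}$, $s\setminus t$ is a finite union of pairwise disjoint elements of $\mathcal{S}$; (c) to every $t\in\mathcal{S}$ one can assign $s_t\in\mathcal{S}$ with $t\subseteq s_t$ such that for all $s,t_1,\dots,t_n\in\mathcal{S}$ there exists $t\in\mathcal{S}$ with $t\subseteq s\setminus\bigcup_{i=1}^n s_{t_i}$ and $s\setminus\big(\bigcup_{i=1}^n s_{t_i}\cup t\big)$ finite; (d) for every $s\in\mathcal{S}$ the set $\{s\cap t: t\in\mathcal{S}\}$ is countable. For finitely supported $\phi:\Gamma\to\mathbb{R}$, $\|\phi\|=\sup\big(\sum_{i=1}^n(\sum_{a\in s_i}\phi(a))^2\big)^{1/2}$ over all finite families of pairwise disjoint $s_1,\dots,s_n\in\mathcal{S}$; $J\mathcal{S}$ is the completion of the finitely supported functions in this norm. *)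

From HB Require Import structures.
From mathcomp Require Import all_boot all_order all_algebra.
From mathcomp Require Import all_classical all_reals all_analysis.
Set Implicit Arguments. Unset Strict Implicit. Unset Printing Implicit Defensive.
Import Order.TTheory GRing.Theory Num.Theory.
Local Open Scope classical_set_scope.
Local Open Scope ring_scope.

Definition chi {G : Type} (s : set G) : G -> bool := fun a => `[< s a >].

Definition disj_family {G : Type} (S : set (set G)) (l : seq (set G)) : Prop :=
  (forall u, u \in l -> S u) /\
  (forall i j, (i < j < size l)%N -> nth set0 l i `&` nth set0 l j = set0).

Definition lunion {G : Type} (l : seq (set G)) : set G :=
  \big[setU/set0]_(u <- l) u.

Definition CI {G : Type} (S : set (set G)) : Prop :=
  [/\
      (forall s, S s -> countable s)
   /\ (forall x : G, S [set x])
   /\ closed ((@chi G) @` S : set {ptws G -> bool}),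
      (forall s t, S s -> S t -> exists l, disj_family S l /\ s `\` t = lunion l),
      (exists st : set G -> set G,
         (forall t, S t -> S (st t) /\ t `<=` st t) /\
         (forall s (ts : seq (set G)), S s -> (forall t, t \in ts -> S t) ->
            exists t, [/\ S t,
              t `<=` s `\` lunion (map st ts) &
              finite_set (s `\` (lunion (map st ts) `|` t))]))
    &
      (forall s, S s -> countable [set s `&` t | t in S])].

Definition sstar {R : realType} {G : choiceType} (s : set G) (phi : G -> R) : R :=
  \sum_(a \in s) phi a.

Definition JSnorm {R : realType} {G : choiceType} (S : set (set G)) (phi : G -> R)
  : \bar R :=
  ereal_sup [set (Num.sqrt (\sum_(u <- l) (sstar u phi) ^+ 2))%:E
             | l in disj_family S].

Definition fin_supp {R : realType} {G : Type} (phi : G -> R) : Prop :=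
  finite_set [set a | phi a != 0].

Definition cauchy_seq {R : realType} (u : nat -> R) : Prop :=
  forall e : R, 0 < e -> exists N : nat,
    forall m n, (N <= m)%N -> (N <= n)%N -> `|u m - u n| < e.

(* Subsequences are handled through their sets of indices.  A diagonal argument
   reduces the theorem to: for every e > 0, every infinite index set A contains an
   infinite B along which each s^*(phi_n), s in S, eventually oscillates by at most e.
   First refine A so that every coordinate phi_n(a) converges; only countably many
   coordinates are ever nonzero.  If no such B existed, one could build, for every k,
   pairwise disjoint t_1, ..., t_k in S and infinite X, Y with
   |t_i^*(phi_m) - t_i^*(phi_n)| >= e/32 for all m in X and n in Y.  Indeed, given
   t_1, ..., t_k, some s in S oscillates by e along X; by (c), up to a finite set
   (along which phi converges), s is the disjoint union of its trace on
   U = s_{t_1} u ... u s_{t_k} and some t in S disjoint from U.  By (d) there are only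
   countably many traces on U, so X may be refined until all of them converge; then t
   oscillates by e/2 along X and two cluster values of t^*(phi_n) separate X from Y.
   Evaluating the J S norm of phi_m and phi_n on t_1, ..., t_k then gives
   k (e/32)^2 <= 4 M^2, which fails for large k. *)

From HB Require Import structures.
From mathcomp Require Import all_boot all_order all_algebra finmap.
From mathcomp Require Import all_classical all_reals all_analysis.
From mathcomp Require Import ring lra.
Import Order.TTheory GRing.Theory Num.Theory.
Local Open Scope classical_set_scope.
Local Open Scope ring_scope.
Set Implicit Arguments. Unset Strict Implicit. Unset Printing Implicit Defensive.

Definition unbounded (A : set nat) := forall N, exists2 m, A m & (N <= m)%N.

Definition eventually_sub (B A : set nat) :=
  exists N, forall m, B m -> (N <= m)%N -> A m.

Lemma increasing_ge (h : nat -> nat) :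
  {homo h : m n / (m < n)%N} -> forall n, (n <= h n)%N.
Proof. by move=> hS; elim=> // n IH; apply: leq_ltn_trans IH (hS _ _ (ltnSn n)). Qed.

Lemma unbounded_range (h : nat -> nat) :
  {homo h : m n / (m < n)%N} -> unbounded (range h).
Proof. by move=> hS N; exists (h N); [exists N | exact: increasing_ge]. Qed.

Lemma unbounded_tail (A : set nat) N :
  unbounded A -> unbounded (A `&` [set m | (N <= m)%N]).
Proof.
by move=> uA K; have [m Am] := uA (maxn N K); rewrite geq_max => /andP[Nm Km]; exists m.
Qed.

Lemma increasing_selection (C : nat -> set nat) : (forall n, unbounded (C n)) ->
  exists h, {homo h : m n / (m < n)%N} /\ forall n, C n (h n).
Proof.
move=> uC.
have /choice[p Hp] : forall nN : nat * nat, exists m, C nN.1 m /\ (nN.2 <= m)%N.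
  by move=> [n N]; have [m Cm Nm] := uC n N; exists m.
pose fix h n := if n is k.+1 then p (k.+1, (h k).+1) else p (0, 0)%N.
exists h; split; first apply: homo_ltn => [|n]; first exact: ltn_trans.
- by have [] := Hp (n.+1, (h n).+1).
- by case=> [|n]; [have [] := Hp (0, 0)%N | have [] := Hp (n.+1, (h n).+1)].
Qed.

Section Diagonal.
Variable Q : nat -> set nat -> Prop.
Hypothesis Q_eventually_sub : forall k A B, Q k A -> eventually_sub B A -> Q k B.
Hypothesis Q_refine :
  forall k A, unbounded A -> exists B, [/\ B `<=` A, unbounded B & Q k B].

Lemma diagonal_refinement A : unbounded A ->
  exists h, [/\ {homo h : m n / (m < n)%N}, forall n, A (h n) & forall k, Q k (range h)].
Proof.
move=> uA.
have /choice[F HF] : forall kB : nat * set nat, exists B', unbounded kB.2 ->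
    [/\ B' `<=` kB.2, unbounded B' & Q kB.1 B'].
  move=> [k B]; have [/(Q_refine k)[B' HB']|nB] := pselect (unbounded B).
    by exists B'.
  by exists B => /nB.
pose fix C n := if n is k.+1 then F (k, C k) else A.
have uC n : unbounded (C n) by elim: n => // n IH; have [] := HF (n, C n) IH.
have C_decr i j : (i <= j)%N -> C j `<=` C i.
  move=> /subnK <-; elim: (j - i)%N => // d IH.
  by rewrite addSn; apply: subset_trans IH; have [] := HF (d + i, C (d + i))%N (uC _).
have [h [hS hC]] := increasing_selection uC.
exists h; split=> // [n|k]; first exact: C_decr (leq0n n) _ (hC n).
have [_ _ /Q_eventually_sub QC] := HF (k, C k) (uC k); apply: QC.
exists (h k.+1) => _ [j _ <-]; rewrite (leq_mono hS) => kj; exact: C_decr kj _ (hC j).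
Qed.

End Diagonal.

Section RealSequencesOnIndexSets.
Variable R : realType.
Implicit Types (A B X Y : set nat) (f g : nat -> R).

Definition oscillation_le A f (e : R) := exists N, forall m n,
  A m -> A n -> (N <= m)%N -> (N <= n)%N -> `|f m - f n| <= e.

Definition cauchy_on A f := forall e : R, 0 < e -> oscillation_le A f e.

Definition cvg_on A f (L : R) := forall e : R, 0 < e ->
  exists N, forall m, A m -> (N <= m)%N -> `|f m - L| < e.

Lemma oscillation_le_eventually_sub A B f e :
  oscillation_le A f e -> eventually_sub B A -> oscillation_le B f e.
Proof.
move=> [N HN] [K HK]; exists (maxn N K) => m n Bm Bn.
rewrite !geq_max => /andP[Nm Km] /andP[Nn Kn].
by apply: HN => //; [exact: HK Bm Km | exact: HK Bn Kn].
Qed.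

Lemma cauchy_on_sub A B f : cauchy_on A f -> B `<=` A -> cauchy_on B f.
Proof.
move=> cA BA e /cA oA; apply: oscillation_le_eventually_sub oA _.
by exists 0%N => m /BA.
Qed.

Lemma oscillation_leD A f g e1 e2 : oscillation_le A f e1 -> oscillation_le A g e2 ->
  oscillation_le A (f \+ g) (e1 + e2).
Proof.
move=> [N1 H1] [N2 H2]; exists (maxn N1 N2) => m n Am An.
rewrite !geq_max => /andP[N1m N2m] /andP[N1n N2n] /=.
rewrite opprD addrACA; apply: le_trans (ler_normD _ _) _.
by apply: lerD; [exact: H1 | exact: H2].
Qed.

Lemma cauchy_onD A f g : cauchy_on A f -> cauchy_on A g -> cauchy_on A (f \+ g).
Proof.
move=> cf cg e e0; rewrite (splitr e).
by apply: oscillation_leD; [apply: cf | apply: cg]; rewrite divr_gt0.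
Qed.

Lemma cauchy_on_cst A (c : R) : cauchy_on A (fun=> c).
Proof. by move=> e e0; exists 0%N => *; rewrite subrr normr0 ltW. Qed.

Lemma cauchy_on_sum (I : Type) A (r : seq I) (F : I -> nat -> R) :
  (forall i, cauchy_on A (F i)) -> cauchy_on A (fun n => \sum_(i <- r) F i n).
Proof.
move=> cF; elim: r => [|i r IH].
  by under eq_fun do rewrite big_nil; exact: cauchy_on_cst.
by under eq_fun do rewrite big_cons; exact: cauchy_onD.
Qed.

Lemma cvg_on_cauchy A f L : cvg_on A f L -> cauchy_on A f.
Proof.
move=> cL e e0; have [N HN] := cL (e / 2) (ltac:(lra) : 0 < e / 2).
exists N => m n Am An Nm Nn; apply: ltW; apply: le_lt_trans (ler_distD L _ _) _.
by rewrite (distrC L) (splitr e) ltrD ?HN.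
Qed.

Lemma bolzano_weierstrass_on A f : unbounded A -> (exists M, forall n, `|f n| <= M) ->
  exists L B, [/\ B `<=` A, unbounded B & cvg_on B f L].
Proof.
move=> uA [M fM]; have [h [hS hA]] := increasing_selection (fun _ => uA).
have bh : bounded_fun (f \o h).
  exists M; split; first by rewrite num_real.
  by move=> x Mx n _; apply: le_trans (fM _) (ltW Mx).
have [sigma sigma_incr] := bolzano_weierstrass bh.
set L := lim _ => /cvgrPdist_lt cvgL.
have hsS : {homo h \o sigma : m n / (m < n)%N}.
  move=> m n mn; apply: hS; move: m n mn.
  apply: (@homo_ltn _ sigma (fun a b => (a < b)%N)) => [|n]; first exact: ltn_trans.
  exact: (proj2 (increasing_seqP sigma) sigma_incr n).
exists L, (range (h \o sigma)).
split; [by move=> _ [j _ <-]; apply: hA | exact: unbounded_range |].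
move=> e /cvgL[N _ HN]; exists ((h \o sigma) N) => _ [j _ <-].
rewrite (leq_mono hsS) => Nj.
by rewrite distrC; apply: HN.
Qed.

Lemma cauchy_refinement_countable (T : Type) (I : set T) (F : T -> nat -> R) :
  countable I -> (forall i, I i -> exists M, forall n, `|F i n| <= M) ->
  forall A, unbounded A ->
  exists B, [/\ B `<=` A, unbounded B & forall i, I i -> cauchy_on B (F i)].
Proof.
move=> /countable_injP[c c_inj] bF A uA.
have [] := @diagonal_refinement
  (fun k B => forall i, I i -> c i = k -> cauchy_on B (F i)) _ _ A uA.
- move=> k B B' QB B'B i Ii ci e /(QB i Ii ci) oB.
  exact: oscillation_le_eventually_sub oB B'B.
- move=> k B uB; have [[i [Ii ci]]|no_i] := pselect (exists i, I i /\ c i = k).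
    have [L [B' [B'B uB' cvgB']]] := bolzano_weierstrass_on uB (bF i Ii).
    exists B'; split=> // j Ij cj; have -> : j = i by apply: c_inj; rewrite ?cj // mem_set.
    exact: cvg_on_cauchy cvgB'.
  by exists B; split=> // i Ii ci; exfalso; apply: no_i; exists i.
- move=> h [hS hA hQ]; exists (range h); split; [by move=> _ [j _ <-] | | ].
    exact: unbounded_range.
  by move=> i Ii; apply: (hQ (c i)).
Qed.

Lemma two_cluster_values X f c : 0 < c -> unbounded X ->
  (exists M, forall n, `|f n| <= M) -> ~ oscillation_le X f c ->
  exists L1 L2 X1 X2, [/\ X1 `<=` X, unbounded X1 & cvg_on X1 f L1] /\
    [/\ X2 `<=` X, unbounded X2 & cvg_on X2 f L2] /\ c / 4 <= `|L1 - L2|.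
Proof.
move=> c0 uX fB osc.
have [L1 [X1 [X1X uX1 cvg1]]] := bolzano_weierstrass_on uX fB.
pose X2 := X `&` [set m | c / 2 <= `|f m - L1|].
have uX2 : unbounded X2.
  move=> N; apply: contrapT => none; apply: osc; exists N => m n Xm Xn Nm Nn.
  have near_L1 k : X k -> (N <= k)%N -> `|f k - L1| < c / 2.
    by move=> Xk Nk; rewrite ltNge; apply/negP => far; apply: none; exists k.
  apply: ltW; apply: le_lt_trans (ler_distD L1 _ _) _.
  by rewrite (distrC L1) (splitr c) ltrD ?near_L1.
have [L2 [X3 [X3X2 uX3 cvg3]]] := bolzano_weierstrass_on uX2 fB.
exists L1, L2, X1, X3; do ![split=> //]; first by move=> m /X3X2[].
have [N HN] := cvg3 (c / 4) (ltac:(lra) : 0 < c / 4).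
have [m X3m Nm] := uX3 N; have [_ /= far] := X3X2 m X3m; have near_L2 := HN m X3m Nm.
have := ler_distD L2 L1 (f m); rewrite (distrC L1 (f m)) (distrC L2 (f m)); lra.
Qed.

Lemma cvg_on_separated X Y f La Lb d : 0 < d ->
  cvg_on X f La -> cvg_on Y f Lb -> d * 2 <= `|La - Lb| ->
  exists N, forall m n, X m -> Y n -> (N <= m)%N -> (N <= n)%N -> d <= `|f m - f n|.
Proof.
move=> d0 cX cY dL.
have [N1 H1] := cX (d / 2) (ltac:(lra) : 0 < d / 2).
have [N2 H2] := cY (d / 2) (ltac:(lra) : 0 < d / 2).
exists (maxn N1 N2) => m n Xm Yn; rewrite !geq_max => /andP[N1m _] /andP[_ N2n].
have := H1 m Xm N1m; have := H2 n Yn N2n.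
have := ler_distD (f m) La Lb; have := ler_distD (f n) (f m) Lb.
rewrite (distrC La (f m)); lra.
Qed.

Lemma separated_refinement X Y f c : 0 < c -> unbounded X -> unbounded Y ->
  (exists M, forall n, `|f n| <= M) -> ~ oscillation_le X f c ->
  exists X' Y', [/\ X' `<=` X, Y' `<=` Y, unbounded X', unbounded Y' &
    forall m n, X' m -> Y' n -> c / 16 <= `|f m - f n|].
Proof.
move=> c0 uX uY fB osc.
have [L1 [L2 [X1 [X2 [[X1X uX1 cvg1] [[X2X uX2 cvg2] L12]]]]]] :=
  two_cluster_values c0 uX fB osc.
have [L3 [Y1 [Y1Y uY1 cvg3]]] := bolzano_weierstrass_on uY fB.
have [La [Xa [XaX uXa cvga far]]] : exists La Xa,
    [/\ Xa `<=` X, unbounded Xa, cvg_on Xa f La & c / 16 * 2 <= `|La - L3|].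
  have [far1|near1] := leP (c / 16 * 2) `|L1 - L3|; first by exists L1, X1.
  exists L2, X2; split=> //.
  by have := ler_distD L3 L1 L2; rewrite (distrC L3 L2); lra.
have [N HN] := cvg_on_separated (ltac:(lra) : 0 < c / 16) cvga cvg3 far.
exists (Xa `&` [set m | (N <= m)%N]), (Y1 `&` [set n | (N <= n)%N]).
split; [by move=> m [/XaX] | by move=> n [/Y1Y] | exact: unbounded_tail
       | exact: unbounded_tail | by move=> m n [Xam Nm] [Y1n Nn]; apply: HN].
Qed.

Lemma sum_sqr_le_of_dist (T : eqType) (r : seq T) (x y : T -> R) (d : R) :
  0 <= d -> (forall u, u \in r -> d <= `|x u - y u|) ->
  (size r)%:R * d ^+ 2 <= 2 * \sum_(u <- r) x u ^+ 2 + 2 * \sum_(u <- r) y u ^+ 2.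
Proof.
move=> d0 dxy; rewrite -sum1_size natr_sum mulr_suml !mulr_sumr -big_split /=.
rewrite big_seq [X in _ <= X]big_seq; apply: ler_sum => u /dxy dxyu.
have : d ^+ 2 <= (x u - y u) ^+ 2.
  by rewrite -[X in _ <= X]real_normK ?num_real // ler_sqr ?nnegrE ?(le_trans d0).
have := sqr_ge0 (x u + y u); nra.
Qed.

End RealSequencesOnIndexSets.

Section SStar.
Variables (R : realType) (G : choiceType).
Implicit Types (A B : set G) (f : G -> R) (S : set (set G)).

Lemma sstar_set0 f : sstar set0 f = 0.
Proof. exact: fsbig_set0. Qed.

Lemma sstar_set1 f a : sstar [set a] f = f a.
Proof. exact: fsbig_set1. Qed.

Lemma sstar_setU A B f : fin_supp f -> A `&` B = set0 ->
  sstar (A `|` B) f = sstar A f + sstar B f.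
Proof.
move=> ff AB; rewrite /sstar fsbig_supp [X in _ = X + _]fsbig_supp.
rewrite [X in _ = _ + X]fsbig_supp setIUl fsbigU0 //.
- by apply: sub_finite_set ff => x [_ /eqP].
- by apply: sub_finite_set ff => x [_ /eqP].
- by move=> x [[Ax _] [Bx _]]; rewrite -AB.
Qed.

Lemma JSnorm_sum_sqr_le S f M l : (JSnorm S f <= M%:E)%E -> disj_family S l ->
  \sum_(u <- l) sstar u f ^+ 2 <= M ^+ 2 /\ 0 <= M.
Proof.
move=> fM dl; set x := \sum_(u <- l) _.
have x0 : 0 <= x by apply: sumr_ge0 => u _; exact: sqr_ge0.
have : ((Num.sqrt x)%:E <= M%:E)%E.
  by apply: le_trans fM; apply: ereal_sup_ubound; exists l.
rewrite lee_fin => sqrt_le; have M0 := le_trans (sqrtr_ge0 x) sqrt_le.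
by split=> //; rewrite -(sqr_sqrtr x0) ler_pXn2r ?nnegrE ?sqrtr_ge0.
Qed.

Lemma disj_family_nil S : disj_family S [::].
Proof. by split=> [u|i j] /=; rewrite ?in_nil ?ltn0 ?andbF. Qed.

Lemma disj_family1 S s : S s -> disj_family S [:: s].
Proof.
move=> Ss; split=> [u|[|i] [|j]] //=; first by rewrite mem_seq1 => /eqP ->.
all: by rewrite ?ltnS ?ltn0 ?andbF.
Qed.

Lemma disj_family_cons S t ts : disj_family S ts -> S t ->
  (forall u, u \in ts -> t `&` u = set0) -> disj_family S (t :: ts).
Proof.
move=> [Sts dts] St tts; split=> [u|[|i] [|j] //=].
  by rewrite in_cons => /orP[/eqP ->|/Sts].
- by move=> jts; apply/tts/mem_nth.
- by rewrite !ltnS => /andP[ij jts]; apply: dts; rewrite ij.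
Qed.

Lemma sstar_le_JSnorm S f M s : (JSnorm S f <= M%:E)%E -> S s -> `|sstar s f| <= M.
Proof.
move=> fM Ss; have [+ M0] := JSnorm_sum_sqr_le fM (disj_family1 Ss).
rewrite big_seq1 => sq; rewrite -[M]ger0_norm // -ler_sqr ?nnegrE ?normr_ge0 //.
by rewrite !real_normK ?num_real.
Qed.

End SStar.

Definition traces (T : Type) (S : set (set T)) (A : set T) := [set s `&` A | s in S].

Lemma traces_set0 (T : Type) (S : set (set T)) : countable (traces S set0).
Proof.
apply: sub_countable (countable1 set0); apply: subset_card_le.
by move=> _ [s _ <-]; rewrite setI0.
Qed.

Lemma countable_tracesU (T : Type) (S : set (set T)) (A B : set T) :
  countable (traces S A) -> countable (traces S B) -> countable (traces S (A `|` B)).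
Proof.
move=> cA cB; have cAB := countableX cA cB.
apply: sub_countable (sub_countable (card_image_le (fun p => p.1 `|` p.2) _) cAB).
apply: subset_card_le => _ [s Ss <-]; exists (s `&` A, s `&` B).
  by split; exists s.
by rewrite setIUr.
Qed.

Section Refinement.
Variables (R : realType) (G : choiceType) (S : set (set G)).
Hypothesis S_set1 : forall a, S [set a].
Variable st : set G -> set G.
Hypothesis st_S : forall t, S t -> S (st t) /\ t `<=` st t.
Hypothesis st_complement : forall s ts, S s -> (forall t, t \in ts -> S t) ->
  exists t, [/\ S t, t `<=` s `\` lunion (map st ts) &
                finite_set (s `\` (lunion (map st ts) `|` t))].
Hypothesis S_trace_countable : forall s, S s -> countable [set s `&` t | t in S].
Variable phi : nat -> G -> R.
Hypothesis phi_fin : forall n, fin_supp (phi n).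
Variable M : R.
Hypothesis phi_bounded : forall n, (JSnorm S (phi n) <= M%:E)%E.

Definition small_oscillation (e : R) (A : set nat) :=
  forall s, S s -> oscillation_le A (fun n => sstar s (phi n)) e.

Let U (ts : seq (set G)) := lunion (map st ts).

Lemma U_cons t ts : U (t :: ts) = st t `|` U ts.
Proof. by rewrite /U /lunion /= big_cons. Qed.

Lemma sub_U u ts : u \in ts -> S u -> u `<=` U ts.
Proof.
move=> + Su; elim: ts => [|w ts IH]; rewrite ?in_nil // in_cons U_cons.
move=> /orP[/eqP uw|/IH uU] x ux; [left; rewrite -uw; exact: (st_S Su).2 | right].
exact: uU.
Qed.

Lemma sstar_phi_le s n : S s -> `|sstar s (phi n)| <= M.
Proof. exact: sstar_le_JSnorm. Qed.

Lemma phi_le a n : `|phi n a| <= M.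
Proof. by have := sstar_phi_le n (S_set1 a); rewrite sstar_set1. Qed.

Lemma sstar_finite_bounded F : finite_set F ->
  exists B, forall n, `|sstar F (phi n)| <= B.
Proof.
move=> fF; exists (\sum_(a <- fset_set F) M) => n; rewrite /sstar fsbig_finite //.
by apply: le_trans (ler_norm_sum _ _ _) _; apply: ler_sum => a _; exact: phi_le.
Qed.

Lemma sstar_decomposition s ts : S s -> (forall u, u \in ts -> S u) ->
  exists t F, [/\ S t, t `<=` s `\` U ts, finite_set F & forall n,
    sstar s (phi n) = sstar (s `&` U ts) (phi n) + sstar t (phi n) + sstar F (phi n)].
Proof.
move=> Ss Sts; have [t [St tsU fF]] := st_complement Ss Sts.
exists t, (s `\` (U ts `|` t)); split=> // n.
have Es : s = (s `&` U ts) `|` (t `|` (s `\` (U ts `|` t))).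
  apply/seteqP; split=> [x sx|x [[]//|[/tsU[]//|[]//]]].
  have [Ux|nUx] := pselect (U ts x); first by left.
  have [tx|ntx] := pselect (t x); first by right; left.
  by right; right; split=> // -[].
rewrite {1}Es sstar_setU //; last first.
  by apply/seteqP; split=> x // [[_ Ux] [/tsU[_ //]|[_ []]]]; left.
rewrite sstar_setU // ?addrA //.
by apply/seteqP; split=> x // [tx [_ []]]; right.
Qed.

Lemma traces_U_countable ts : (forall u, u \in ts -> S u) -> countable (traces S (U ts)).
Proof.
elim: ts => [|u ts IH] Sts; first by rewrite /U /lunion big_nil; exact: traces_set0.
have Su : S u by apply: Sts; rewrite mem_head.
rewrite U_cons; apply: countable_tracesU; last first.
  by apply: IH => w wts; apply: Sts; rewrite in_cons wts orbT.
apply: sub_countable (S_trace_countable (st_S Su).1); apply: subset_card_le.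
by move=> _ [s Ss <-]; exists s; rewrite // setIC.
Qed.

Lemma traces_U_bounded ts c : (forall u, u \in ts -> S u) -> traces S (U ts) c ->
  exists B, forall n, `|sstar c (phi n)| <= B.
Proof.
move=> Sts [s Ss <-]; have [t [F [St _ fF dec]]] := sstar_decomposition Ss Sts.
have [B FB] := sstar_finite_bounded fF; exists (M + M + B) => n.
have -> : sstar (s `&` U ts) (phi n) = sstar s (phi n) - sstar t (phi n) - sstar F (phi n).
  by rewrite dec; ring.
apply: le_trans (ler_normB _ _) (lerD _ (FB n)).
by apply: le_trans (ler_normB _ _) (lerD _ _); exact: sstar_phi_le.
Qed.

Section Separation.
Variable A0 : set nat.
Hypothesis A0_unbounded : unbounded A0.
Hypothesis A0_coord : forall a, cauchy_on A0 (fun n => phi n a).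
Variable e : R.
Hypothesis e_gt0 : 0 < e.
Hypothesis no_small : forall X, X `<=` A0 -> unbounded X -> ~ small_oscillation e X.

Lemma finite_sstar_cauchy F : finite_set F -> cauchy_on A0 (fun n => sstar F (phi n)).
Proof. by move=> fF; under eq_fun do rewrite /sstar fsbig_finite //; exact: cauchy_on_sum. Qed.

(* e / 32 = (e / 2) / 16: each new t oscillates by e / 2 (oscillating_remainder),
   and separated_refinement loses a factor 16. *)
Definition separating ts X Y := [/\ disj_family S ts, X `<=` A0, unbounded X /\ unbounded Y,
  (forall u, u \in ts -> forall m n, X m -> Y n ->
     e / 32 <= `|sstar u (phi m) - sstar u (phi n)|) &
  (forall c, traces S (U ts) c -> cauchy_on X (fun n => sstar c (phi n)))].

Lemma separating_nil : separating [::] A0 A0.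
Proof.
split; [exact: disj_family_nil | exact: subset_refl | by [] | by move=> u |].
move=> _ [s _ <-]; rewrite /U /lunion big_nil setI0.
by under eq_fun do rewrite sstar_set0; exact: cauchy_on_cst.
Qed.

Lemma oscillating_remainder ts X Y : separating ts X Y -> exists t,
  [/\ S t, t `<=` ~` U ts & ~ oscillation_le X (fun n => sstar t (phi n)) (e / 2)].
Proof.
move=> [dts XA0 [uX _] _ trX].
have [s Ss osc] : exists2 s, S s & ~ oscillation_le X (fun n => sstar s (phi n)) e.
  apply: contrapT => all_small; apply: (no_small XA0 uX) => s Ss.
  by apply: contrapT => osc; apply: all_small; exists s.
have [t [F [St tsU fF dec]]] := sstar_decomposition Ss dts.1.
exists t; split=> // [x /tsU[]//|osct]; apply: osc.
have cg : cauchy_on X (fun n => sstar (s `&` U ts) (phi n) + sstar F (phi n)).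
  apply: cauchy_onD; first by apply: trX; exists s.
  exact: cauchy_on_sub (finite_sstar_cauchy fF) XA0.
have -> : (fun n => sstar s (phi n)) = (fun n => sstar t (phi n)) \+
    (fun n => sstar (s `&` U ts) (phi n) + sstar F (phi n)).
  by apply: funext => n; rewrite dec /=; ring.
by rewrite (splitr e); apply: oscillation_leD osct (cg _ _); rewrite divr_gt0.
Qed.

Lemma separating_cons ts X Y : separating ts X Y ->
  exists t X' Y', separating (t :: ts) X' Y'.
Proof.
move=> sep; have [t [St tU osc]] := oscillating_remainder sep.
case: sep => dts XA0 [uX uY] septs trX; have Sts := dts.1.
have e2_gt0 : 0 < e / 2 by rewrite divr_gt0.
have [X1 [Y1 [X1X Y1Y uX1 uY1 sept]]] :=
  separated_refinement e2_gt0 uX uY (ex_intro _ M (fun n => sstar_phi_le n St)) osc.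
have Sts' u : u \in t :: ts -> S u by rewrite in_cons => /orP[/eqP ->|/Sts].
have [X2 [X2X1 uX2 trX2]] := cauchy_refinement_countable
  (traces_U_countable Sts') (fun c => traces_U_bounded Sts') uX1.
exists t, X2, Y1; split=> //.
- apply: disj_family_cons => // u uts; rewrite -subset0 => x [tx ux].
  exact: tU x tx (sub_U uts (Sts u uts) ux).
- by move=> m /X2X1 /X1X /XA0.
- move=> u; rewrite in_cons => /orP[/eqP -> | uts] m n /X2X1 X1m Y1n.
    by have := sept m n X1m Y1n; lra.
  exact: septs uts m n (X1X _ X1m) (Y1Y _ Y1n).
Qed.

Lemma separating_size k : exists ts X Y, size ts = k /\ separating ts X Y.
Proof.
elim: k => [|k [ts [X [Y [<- sep]]]]].
  by exists [::], A0, A0; split; last exact: separating_nil.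
by have [t [X' [Y' sep']]] := separating_cons sep; exists (t :: ts), X', Y'.
Qed.

Lemma separating_size_le ts X Y : separating ts X Y ->
  (size ts)%:R * (e / 32) ^+ 2 <= 4 * M ^+ 2.
Proof.
move=> [dts _ [uX uY] septs _].
have [m Xm _] := uX 0%N; have [n Yn _] := uY 0%N.
have [sm _] := JSnorm_sum_sqr_le (phi_bounded m) dts.
have [sn _] := JSnorm_sum_sqr_le (phi_bounded n) dts.
have e32_ge0 : 0 <= e / 32 by rewrite divr_ge0 ?ltW.
have := sum_sqr_le_of_dist e32_ge0 (fun u uts => septs u uts m n Xm Yn).
lra.
Qed.

Lemma no_small_absurd : False.
Proof.
pose k := Num.Def.archi_bound (4 * M ^+ 2 / (e / 32) ^+ 2).
have [ts [X [Y [sz sep]]]] := separating_size k.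
have := separating_size_le sep; rewrite sz.
have := archi_boundP (divr_ge0 (mulr_ge0 (ler0n _ 4) (sqr_ge0 M)) (sqr_ge0 (e / 32))).
rewrite -/k ltr_pdivrMr ?exprn_gt0 ?divr_gt0 //; lra.
Qed.

End Separation.

Lemma coordinate_refinement A : unbounded A -> exists A0,
  [/\ A0 `<=` A, unbounded A0 & forall a, cauchy_on A0 (fun n => phi n a)].
Proof.
move=> uA; pose D := \bigcup_(n in [set: nat]) [set a | phi n a != 0].
have cD : countable D.
  by apply: bigcup_countable => // n _; exact: finite_set_countable (phi_fin n).
have [A0 [A0A uA0 cA0]] := cauchy_refinement_countable (F := fun a n => phi n a) cD
  (fun a _ => ex_intro _ M (phi_le a)) uA.
exists A0; split=> // a; have [Da|nDa] := pselect (D a); first exact: cA0.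
have -> : (fun n => phi n a) = fun=> 0.
  by apply: funext => n; apply: contrapT => /eqP phi_na; apply: nDa; exists n.
exact: cauchy_on_cst.
Qed.

Lemma small_oscillation_refinement e A : 0 < e -> unbounded A ->
  exists B, [/\ B `<=` A, unbounded B & small_oscillation e B].
Proof.
move=> e0 uA; have [A0 [A0A uA0 cA0]] := coordinate_refinement uA.
apply: contrapT => none; apply: (no_small_absurd uA0 cA0 e0) => X XA0 uX sX.
by apply: none; exists X; split=> //; exact: subset_trans XA0 A0A.
Qed.

End Refinement.

Theorem lemma2p8 (R : realType) (G : choiceType) (S : set (set G))
  (HS : CI S) (phi : nat -> G -> R)
  (Hfin : forall n, fin_supp (phi n))
  (Hbd : exists M : R, forall n, (JSnorm S (phi n) <= M%:E)%E) :
  exists sigma : nat -> nat,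
    (forall m n, (m < n)%N -> (sigma m < sigma n)%N) /\
    (forall s, S s -> cauchy_seq (fun n => sstar s (phi (sigma n)))).
Proof.
have [[_ [S_set1 _]] _ [st [st_S st_complement]] S_traces] := HS.
have [M phi_bounded] := Hbd.
pose Q k := small_oscillation S phi k.+1%:R^-1.
have Q_eventually_sub k A B : Q k A -> eventually_sub B A -> Q k B.
  by move=> QA BA s Ss; apply: oscillation_le_eventually_sub (QA s Ss) BA.
have Q_refine k A : unbounded A -> exists B, [/\ B `<=` A, unbounded B & Q k B].
  apply: (small_oscillation_refinement S_set1 st_S st_complement S_traces Hfin
    phi_bounded); by rewrite invr_gt0.
have [h [h_incr _ h_small]] := @diagonal_refinement Q Q_eventually_sub Q_refine setT
  (fun N => ex_intro2 _ _ N I (leqnn N)).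
exists h; split=> // s Ss e e0.
have [k ke] : exists k, k.+1%:R^-1 < e.
  exists (Num.Def.archi_bound e^-1); rewrite invf_plt ?posrE //.
  by apply: lt_le_trans (archi_boundP (ltW _)) _; rewrite ?ler_nat ?invr_gt0.
have [N HN] := h_small k s Ss; exists N => m n Nm Nn; apply: le_lt_trans ke.
by apply: HN; [exists m | exists n | apply: leq_trans Nm (increasing_ge h_incr m)
              | apply: leq_trans Nn (increasing_ge h_incr n)].
Qed.
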